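(* Let $p,n$ be positive integers, $\lambda$ a partition of $n$ and $\mu\in\mathrm{Par}(n,p)$, such that $\lambda\in\mathrm{Par}(n,pq)$ for the values of $q$ considered. There is an integer $q_+$ with $1\le q_+\le n$ such that $(\bar\lambda,\bar\mu)\in\Gamma^{p,q}$ for every integer $q\ge q_+$.
   Context: $\mathrm{Par}(n,d)$ is the set of partitions of $n$ with at most $d$ rows. For a partition $\lambda$ of $n$, $\bar\lambda=(\lambda_1/n,\lambda_2/n,\dots)$, padded with zeros to the required length. $\Gamma^{p,q}$ is the set of pairs $(\mathrm{spec}(\rho_{AB}),\mathrm{spec}(\rho_A))$, where $\rho_{AB}$ ranges over density operators on $\mathbb{C}^p\otimes\mathbb{C}^q$, $\rho_A=\mathrm{tr}_B\rho_{AB}$, and spectra are non-increasingly ordered vectors in $\mathbb{R}^{pq}$ and $\mathbb{R}^p$. *)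

From HB Require Import structures.
From mathcomp Require Import all_boot all_order all_algebra.
From mathcomp Require Import complex.
From mathcomp Require Import Rstruct.
Set Implicit Arguments. Unset Strict Implicit. Unset Printing Implicit Defensive.
Import Order.TTheory GRing.Theory Num.Theory.
Local Open Scope ring_scope.

Notation RR := Rdefinitions.R.
Notation CC := (complex Rdefinitions.R).

Definition is_partition (n : nat) (l : seq nat) : bool :=
  [&& sorted geq l, all (fun x : nat => (0 < x)%N) l & (sumn l == n)%N].

Definition in_Par (n d : nat) (l : seq nat) : bool :=
  is_partition n l && (size l <= d)%N.

Definition bar (n d : nat) (l : seq nat) : 'rV[RR]_d :=
  \row_(i < d) ((nth 0%N l i)%:R / n%:R).

Definition adj_mx (m k : nat) (A : 'M[CC]_(m, k)) : 'M[CC]_(k, m) :=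
  (map_mx (fun z : CC => z^*) A)^T.

Definition density (N : nat) (rho : 'M[CC]_N) : Prop :=
  [/\ adj_mx rho = rho,
      (forall v : 'cV[CC]_N, 0 <= (adj_mx v *m rho *m v) 0 0)
    & \tr rho = 1].

(* partial trace over the second factor B of C^p (x) C^q;
   basis vector e_i (x) f_j has index mxvec_index i j *)
Definition ptraceB (p q : nat) (rho : 'M[CC]_(p * q)) : 'M[CC]_p :=
  \matrix_(i < p, i' < p) \sum_(j < q) rho (mxvec_index i j) (mxvec_index i' j).

Definition is_spec (N : nat) (A : 'M[CC]_N) (v : 'rV[RR]_N) : Prop :=
  char_poly A = \prod_(i < N) ('X - ((v 0 i)%:C%C)%:P)
  /\ (forall i j : 'I_N, (i <= j)%N -> v 0 j <= v 0 i).

Definition Gamma (p q : nat) (x : 'rV[RR]_(p * q)) (y : 'rV[RR]_p) : Prop :=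
  exists rho : 'M[CC]_(p * q),
    [/\ density rho, is_spec rho x & is_spec (ptraceB rho) y].
Arguments Gamma p q x y : clear implicits.

(* Suppose the weights v on C^p (x) C^q and w on C^p vanish beyond their first
   q entries.  For l < q put psi_l = sum_i sqrt(w_i) e_i (x) e_((l + i) mod q)
   and rho = sum_l v_l |psi_l><psi_l|.  The psi_l are orthonormal, so with X
   the matrix of columns psi_l and D = diag(v) we get D X^* X = D, and rho =
   X D X^* has the characteristic polynomial of D X^* X = D.  Since l + i and
   l + i' are distinct mod q for distinct i, i' < q, every psi_l has reduced
   state diag(w), hence so does rho.  A partition of n has at most n parts, so
   q_+ = n works. *)

From HB Require Import structures.
From mathcomp Require Import all_boot all_order all_algebra.
From mathcomp Require Import complex Rstruct.
Set Implicit Arguments. Unset Strict Implicit. Unset Printing Implicit Defensive.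
Import Order.TTheory GRing.Theory Num.Theory.
Local Open Scope ring_scope.

Lemma char_poly_mulmxC (R : idomainType) n (A B : 'M[R]_n) :
  char_poly (A *m B) = char_poly (B *m A).
Proof.
set A' := map_mx polyC A; set B' := map_mx polyC B.
set M := block_mx ('X%:M : 'M[{poly R}]_n) A' B' 1%:M.
have eAB : M *m block_mx 1%:M 0 (- B') 1%:M
           = block_mx (char_poly_mx (A *m B)) A' 0 1%:M.
  rewrite mulmx_block /char_poly_mx map_mxM -/A' -/B'.
  by rewrite !mulmx1 !mulmx0 !add0r mulmxN mul1mx addrN.
have eBA : block_mx 1%:M 0 (- B') ('X%:M) *m M
           = block_mx ('X%:M) A' 0 (char_poly_mx (B *m A)).
  rewrite mulmx_block /char_poly_mx map_mxM -/A' -/B'.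
  rewrite !mul1mx !mul0mx ?add0r ?addr0 mulmx1 mulNmx scalar_mxC addNr addrC.
  by rewrite -mulNmx.
have := congr1 determinant eAB; have := congr1 determinant eBA.
rewrite !det_mulmx !det_ublock !det_lblock !det1 det_scalar !mulr1 !mul1r.
move=> detBA detAB; apply: (@mulfI _ ('X ^+ n)).
  by rewrite expf_neq0 // polyX_eq0.
by rewrite /char_poly -detBA -detAB mulrC.
Qed.

Lemma char_poly_conj_linv (R : idomainType) n (X D B : 'M[R]_n) :
  D *m (B *m X) = D -> char_poly (X *m D *m B) = char_poly D.
Proof. by move=> DBX; rewrite -mulmxA char_poly_mulmxC -mulmxA DBX. Qed.

Lemma mxtrace_conj_linv (R : comNzRingType) n (X D B : 'M[R]_n) :
  D *m (B *m X) = D -> \tr (X *m D *m B) = \tr D.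
Proof. by move=> DBX; rewrite -mulmxA mxtrace_mulC -mulmxA DBX. Qed.

Lemma adj_mxM m k r (A : 'M[CC]_(m, k)) (B : 'M[CC]_(k, r)) :
  adj_mx (A *m B) = adj_mx B *m adj_mx A.
Proof.
apply/matrixP => i j; rewrite !mxE rmorph_sum; apply: eq_bigr => l _.
by rewrite !mxE rmorphM mulrC.
Qed.

Lemma adj_mxK m k (A : 'M[CC]_(m, k)) : adj_mx (adj_mx A) = A.
Proof. by apply/matrixP => i j; rewrite !mxE conjCK. Qed.

Definition diagC n (v : 'rV[RR]_n) : 'M[CC]_n := diag_mx (map_mx (fun x => x%:C%C) v).

Section DiagC.
Variables (n : nat) (v : 'rV[RR]_n).

Lemma adj_diagC : adj_mx (diagC v) = diagC v.
Proof.
apply/matrixP => i j; rewrite !mxE eq_sym.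
case: eqP => [->|_]; rewrite ?mulr1n ?mulr0n ?conjC0 //.
by apply/CrealP/complex_realP; exists (v 0 j).
Qed.

Lemma char_poly_diagC : char_poly (diagC v) = \prod_(i < n) ('X - ((v 0 i)%:C%C)%:P).
Proof.
rewrite char_poly_trig ?diag_mx_is_trig //; apply: eq_bigr => i _.
by rewrite !mxE eqxx mulr1n.
Qed.

Lemma mxtrace_diagC : \tr (diagC v) = (\sum_i v 0 i)%:C%C.
Proof. by rewrite mxtrace_diag rmorph_sum; apply: eq_bigr => i _; rewrite mxE. Qed.

Lemma mulmx_diagC_mxE m k (X : 'M[CC]_(m, n)) (Y : 'M[CC]_(n, k)) a b :
  (X *m diagC v *m Y) a b = \sum_l X a l * (v 0 l)%:C%C * Y l b.
Proof. by rewrite mxE; apply: eq_bigr => l _; rewrite /diagC mul_mx_diag !mxE. Qed.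

Lemma conj_diagC_psd (m : nat) (X : 'M[CC]_(m, n)) (w : 'cV[CC]_m) :
  (forall i, 0 <= v 0 i) -> 0 <= (adj_mx w *m (X *m diagC v *m adj_mx X) *m w) 0 0.
Proof.
move=> v_ge0; set u := adj_mx X *m w.
have -> : adj_mx w *m (X *m diagC v *m adj_mx X) *m w = adj_mx u *m diagC v *m u.
  by rewrite adj_mxM adj_mxK !mulmxA.
rewrite mxE; apply: sumr_ge0 => l _.
rewrite mul_mx_diag !mxE mulrAC mulr_ge0 ?ler0c //.
by rewrite mulrC mul_conjC_ge0.
Qed.

End DiagC.

Lemma density_conj_diagC n (X : 'M[CC]_n) (v : 'rV[RR]_n) :
  (forall i, 0 <= v 0 i) -> \sum_i v 0 i = 1 ->
  diagC v *m (adj_mx X *m X) = diagC v -> density (X *m diagC v *m adj_mx X).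
Proof.
move=> v_ge0 v_sum1 isoX; split.
- by rewrite !adj_mxM adj_mxK adj_diagC mulmxA.
- by move=> w; apply: conj_diagC_psd.
- by rewrite mxtrace_conj_linv // mxtrace_diagC v_sum1.
Qed.

Lemma sum_mxvec_index (R : nmodType) p q (F : 'I_(p * q) -> R) :
  \sum_k F k = \sum_(i < p) \sum_(j < q) F (mxvec_index i j).
Proof.
by rewrite pair_big (reindex _ (curry_mxvec_bij _ _)); apply: eq_bigr => -[].
Qed.

Lemma adj_mx_real m k (A : 'M[CC]_(m, k)) :
  (forall i j, A i j \is Num.real) -> adj_mx A = A^T.
Proof. by move=> A_real; apply/matrixP => i j; rewrite !mxE conj_Creal. Qed.

Lemma sum_if_modn_eq (R : nmodType) q x (F : 'I_q -> R) (q_gt0 : (0 < q)%N) :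
  \sum_(j < q) (if (x %% q == j)%N then F j else 0) = F (Ordinal (ltn_pmod x q_gt0)).
Proof.
rewrite (bigD1 (Ordinal (ltn_pmod x q_gt0))) //= eqxx big1 ?addr0 // => j ne_j.
by case: eqP => // xj; case/eqP: ne_j; apply: val_inj.
Qed.

Section ShiftIsometry.
Variables (p q : nat) (w : 'rV[RR]_p).
Hypothesis w_ge0 : forall i, 0 <= w 0 i.

Let s i := (Num.sqrt (w 0 i))%:C%C.

(* The column l of shift_mx is psi_l for l < q, and 0 otherwise. *)
Definition shift_mx : 'M[CC]_(p * q) :=
  \matrix_(k, l) mxvec (\matrix_(i < p, j < q)
     if ((l : nat) < q)%N && ((l + i) %% q == j)%N then s i else 0) 0 k.

Lemma shift_mxE i j (l : 'I_(p * q)) : shift_mx (mxvec_index i j) l =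
  if ((l : nat) < q)%N && ((l + i) %% q == j)%N then s i else 0.
Proof. by rewrite mxE mxvecE mxE. Qed.

Lemma adj_shift_mx : adj_mx shift_mx = shift_mx^T.
Proof.
apply: adj_mx_real => k l; case/mxvec_indexP: k => i j; rewrite shift_mxE.
by case: ifP => _; [apply/complex_realP; exists (Num.sqrt (w 0 i)) | apply: real0].
Qed.

Let s_sqr i : s i * s i = (w 0 i)%:C%C.
Proof. by rewrite -rmorphM -expr2 sqr_sqrtr. Qed.

Lemma sum_shift_mx_mul i i' l l' :
  \sum_(j < q) shift_mx (mxvec_index i j) l * shift_mx (mxvec_index i' j) l' =
  if [&& (l < q)%N, (l' < q)%N & (l + i == l' + i' %[mod q])%N]
  then s i * s i' else 0.
Proof.
case: (ltnP l q) => [lq|ql]; last first.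
  by rewrite big1 // => j _; rewrite shift_mxE ltnNge ql mul0r.
have q_gt0 : (0 < q)%N by apply: leq_ltn_trans lq.
rewrite (eq_bigr (fun j : 'I_q => if ((l + i) %% q == j)%N then
  s i * (if (l' < q)%N && ((l' + i') %% q == j)%N then s i' else 0) else 0)).
  by rewrite sum_if_modn_eq /= eq_sym; case: ifP; rewrite ?mulr0.
by move=> j _; rewrite !shift_mxE lq /=; case: ifP; rewrite ?mul0r.
Qed.

Lemma shift_mx_gram (w_sum1 : \sum_i w 0 i = 1) (l l' : 'I_(p * q)) : (l < q)%N ->
  (adj_mx shift_mx *m shift_mx) l l' = (l == l')%:R.
Proof.
move=> lq; rewrite adj_shift_mx mxE sum_mxvec_index.
transitivity (\sum_i (l == l')%:R * (w 0 i)%:C%C).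
  apply: eq_bigr => i _; under eq_bigr => j _ do rewrite mxE.
  rewrite sum_shift_mx_mul lq /=; have [<-|ne] := eqVneq l l'.
    by rewrite lq eqxx s_sqr mul1r.
  case: (ltnP l' q) => l'q /=; last by rewrite mul0r.
  by rewrite eqn_modDr !modn_small // val_eqE (negbTE ne) mul0r.
by rewrite -big_distrr -rmorph_sum w_sum1 rmorph1; apply: mulr1.
Qed.

Lemma diagC_mul_shift_gram (w_sum1 : \sum_i w 0 i = 1) (v : 'rV[RR]_(p * q)) :
  (forall l : 'I_(p * q), (q <= l)%N -> v 0 l = 0) ->
  diagC v *m (adj_mx shift_mx *m shift_mx) = diagC v.
Proof.
move=> v_supp; apply/matrixP => l l'; rewrite /diagC mul_diag_mx mxE [RHS]mxE.
case: (ltnP l q) => lq; first by rewrite shift_mx_gram // mulr_natr.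
by rewrite mxE v_supp // rmorph0 !mul0r mul0rn.
Qed.

Lemma ptraceB_shift_conj (v : 'rV[RR]_(p * q)) :
  (forall i : 'I_p, (q <= i)%N -> w 0 i = 0) ->
  (forall l : 'I_(p * q), (q <= l)%N -> v 0 l = 0) -> \sum_l v 0 l = 1 ->
  ptraceB (shift_mx *m diagC v *m adj_mx shift_mx) = diagC w.
Proof.
move=> w_supp v_supp v_sum1.
have s0 (i : 'I_p) : (q <= i)%N -> s i = 0 by move=> qi; rewrite /s w_supp // sqrtr0.
have sum_j i i' (l : 'I_(p * q)) :
  \sum_(j < q) shift_mx (mxvec_index i j) l * (v 0 l)%:C%C * shift_mx^T l (mxvec_index i' j)
  = (v 0 l)%:C%C * ((i == i')%:R * (w 0 i)%:C%C).
  under eq_bigr => j _ do rewrite [shift_mx^T _ _]mxE mulrAC mulrC.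
  rewrite -big_distrr /= sum_shift_mx_mul.
  case: (ltnP l q) => lq /=; last by rewrite v_supp // rmorph0 !mul0r.
  congr (_ * _); have [<-|ne] := eqVneq i i'; first by rewrite eqxx s_sqr mul1r.
  rewrite mul0r; case: (ltnP i q) => iq; last by rewrite (s0 i) // mul0r; case: ifP.
  case: (ltnP i' q) => i'q; last by rewrite (s0 i') // mulr0; case: ifP.
  by rewrite eqn_modDl !modn_small // val_eqE (negbTE ne).
apply/matrixP => i i'; rewrite adj_shift_mx [LHS]mxE.
under eq_bigr => j _ do rewrite mulmx_diagC_mxE.
rewrite exchange_big /=; under eq_bigr => l _ do rewrite sum_j.
by rewrite -big_distrl /= -rmorph_sum v_sum1 rmorph1 mul1r !mxE mulr_natl.
Qed.

End ShiftIsometry.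

Lemma Gamma_of_supports p q (v : 'rV[RR]_(p * q)) (w : 'rV[RR]_p) :
  (forall l, 0 <= v 0 l) -> (forall i, 0 <= w 0 i) ->
  \sum_l v 0 l = 1 -> \sum_i w 0 i = 1 ->
  (forall l : 'I_(p * q), (q <= l)%N -> v 0 l = 0) ->
  (forall i : 'I_p, (q <= i)%N -> w 0 i = 0) ->
  (forall l l' : 'I_(p * q), (l <= l')%N -> v 0 l' <= v 0 l) ->
  (forall i i' : 'I_p, (i <= i')%N -> w 0 i' <= w 0 i) ->
  Gamma p q v w.
Proof.
move=> v_ge0 w_ge0 v_sum1 w_sum1 v_supp w_supp v_sorted w_sorted.
have isoX := diagC_mul_shift_gram w_ge0 w_sum1 v_supp.
exists (shift_mx q w *m diagC v *m adj_mx (shift_mx q w)); split.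
- exact: density_conj_diagC.
- by split; rewrite // char_poly_conj_linv // char_poly_diagC.
- by split; rewrite // ptraceB_shift_conj // char_poly_diagC.
Qed.

Lemma size_le_sumn (s : seq nat) : all (fun x => 0 < x)%N s -> (size s <= sumn s)%N.
Proof.
elim: s => //= x s IHs /andP[x_gt0 s_gt0]; rewrite -add1n; exact: leq_add x_gt0 (IHs s_gt0).
Qed.

Lemma size_partition n s : is_partition n s -> (size s <= n)%N.
Proof. by case/and3P => _ s_gt0 /eqP <-; apply: size_le_sumn. Qed.

Lemma sum_nth_sumn (s : seq nat) m : (size s <= m)%N ->
  (\sum_(i < m) nth 0 s i)%N = sumn s.
Proof.
move=> sm; rewrite -(big_mkord xpredT (nth 0 s)) (big_cat_nat (leq0n _) sm) /=.
rewrite [X in (_ + X)%N]big1_seq ?addn0; first by rewrite sumnE [RHS](big_nth 0).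
by move=> i /=; rewrite mem_index_iota => /andP[si _]; rewrite nth_default.
Qed.

Lemma nth_sorted_geq (s : seq nat) i j : sorted geq s -> (i <= j)%N ->
  (nth 0 s j <= nth 0 s i)%N.
Proof.
move=> s_sorted ij; have [js|] := ltnP j (size s); last by move=> sj; rewrite nth_default.
have geq_trans : transitive geq by move=> a b c /= ba cb; apply: leq_trans cb ba.
apply: (sorted_leq_nth geq_trans) => //; first exact: leqnn.
by rewrite inE (leq_ltn_trans ij).
Qed.

Section Bar.
Variables (n d : nat) (s : seq nat).

Lemma bar_ge0 i : 0 <= bar n d s 0 i.
Proof. by rewrite mxE divr_ge0 ?ler0n. Qed.

Lemma bar_eq0 (i : 'I_d) : (size s <= i)%N -> bar n d s 0 i = 0.
Proof. by move=> si; rewrite mxE nth_default ?mul0r. Qed.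

Lemma bar_nonincreasing : sorted geq s ->
  forall i j : 'I_d, (i <= j)%N -> bar n d s 0 j <= bar n d s 0 i.
Proof.
move=> s_sorted i j ij; rewrite !mxE ler_wpM2r ?invr_ge0 ?ler0n // ler_nat.
exact: nth_sorted_geq.
Qed.

Lemma sum_bar : (0 < n)%N -> is_partition n s -> (size s <= d)%N ->
  \sum_i bar n d s 0 i = 1.
Proof.
move=> n_gt0 /and3P[_ _ /eqP sum_s] sd.
under eq_bigr => i _ do rewrite mxE.
by rewrite -mulr_suml -natr_sum sum_nth_sumn // sum_s mulfV // pnatr_eq0 -lt0n.
Qed.

End Bar.

Theorem corollary1 (p n : nat) (lam mu : seq nat) :
  (0 < p)%N -> (0 < n)%N ->
  is_partition n lam -> in_Par n p mu ->
  exists qp : nat, (1 <= qp <= n)%N /\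
    forall q : nat, (qp <= q)%N -> in_Par n (p * q) lam ->
      Gamma p q (bar n (p * q) lam) (bar n p mu).
Proof.
move=> _ n_gt0 lam_part /andP[mu_part mu_p].
exists n; split; first by rewrite n_gt0 leqnn.
move=> q nq /andP[_ lam_pq].
have lam_q := leq_trans (size_partition lam_part) nq.
have mu_q := leq_trans (size_partition mu_part) nq.
apply: Gamma_of_supports.
- exact: bar_ge0.
- exact: bar_ge0.
- exact: sum_bar n_gt0 lam_part lam_pq.
- exact: sum_bar n_gt0 mu_part mu_p.
- by move=> l ql; rewrite bar_eq0 // (leq_trans lam_q ql).
- by move=> i qi; rewrite bar_eq0 // (leq_trans mu_q qi).
- by apply: bar_nonincreasing; case/and3P: lam_part.
- by apply: bar_nonincreasing; case/and3P: mu_part.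
Qed.
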